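(* Let $\varphi=\frac{1+\sqrt5}{2}$ be the golden ratio and let $(F_n)_{n\ge1}$ be the Fibonacci numbers with $F_1=F_2=1$ and $F_{n+1}=F_n+F_{n-1}$. For $n\in\mathbb{N}_{>0}$ let $\sigma_{F_n}\in S_{F_n}$ be the Kronecker permutation associated with $(\{k\varphi\})_{k=1}^{F_n}$, i.e. the unique permutation of $\{1,\dots,F_n\}$ with $\{\sigma_{F_n}(1)\varphi\}<\{\sigma_{F_n}(2)\varphi\}<\dots<\{\sigma_{F_n}(F_n)\varphi\}$. Then: (1) If $n$ is even, the cycle decomposition of $\sigma_{F_n}$ consists only of 2-cycles and fixed points. (2) If $n\equiv 1$ or $n\equiv 5 \pmod 6$, the cycle decomposition of $\sigma_{F_n}$ consists of cycles of length 4 and exactly one fixed point. (3) If $n\equiv 3 \pmod 6$, the cycle decomposition of $\sigma_{F_n}$ consists of cycles of length 4 and exactly one cycle of length 2.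
   Context: For real $x$, $\{x\}=x-\lfloor x\rfloor$ denotes the fractional part. For an irrational $\alpha>0$ and $N\in\mathbb{N}$, the $N$ numbers $\{k\alpha\}$, $1\le k\le N$, are distinct, and the Kronecker permutation $\sigma_N\in S_N$ is defined by ordering them increasingly: $\{\sigma_N(1)\alpha\}<\dots<\{\sigma_N(N)\alpha\}$. Cycle lengths refer to the disjoint cycle decomposition of the permutation (a fixed point is a cycle of length 1). *)

From HB Require Import structures.
From mathcomp Require Import all_boot all_order all_algebra all_fingroup.
From mathcomp Require Import reals.
Set Implicit Arguments. Unset Strict Implicit. Unset Printing Implicit Defensive.
Import Order.TTheory GRing.Theory Num.Theory.
Local Open Scope ring_scope.

Fixpoint fib (n : nat) : nat :=
  match n with
  | 0 => 0
  | 1 => 1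
  | (m.+1 as k).+1 => fib k + fib m
  end%N.

Definition frac (R : realType) (x : R) : R := x - (Num.floor x)%:~R.

Definition golden (R : realType) : R := (1 + Num.sqrt 5) / 2.

(* s : {perm 'I_N} encodes a permutation of {1,..,N} via k <-> k-1.
   It is the Kronecker permutation for alpha iff
   {s(1) alpha} < {s(2) alpha} < ... < {s(N) alpha}. *)
Definition is_kronecker_perm (R : realType) (alpha : R) (N : nat)
  (s : {perm 'I_N}) : Prop :=
  forall i j : 'I_N, (i < j)%N ->
    frac ((s i).+1%:R * alpha) < frac ((s j).+1%:R * alpha).

From Pilot Require Import Defs.
From HB Require Import structures.
From mathcomp Require Import all_boot all_order all_algebra all_fingroup.
From mathcomp Require Import reals.
From mathcomp Require Import ring lra zify.
Import Order.TTheory GRing.Theory Num.Theory.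
Set Implicit Arguments. Unset Strict Implicit.

(* Write N = F_n and a = F_(n-1).  Since F_(n+1) - phi F_n = (1 - phi)^n and
   F_n (phi - 1)^n < 1, for 1 <= k <= N the point {k phi} lies in the interval
   [r/N, (r+1)/N) with r = k a mod N if n is odd and r = k a - 1 mod N if n is
   even.  These intervals are distinct, so sorting the points recovers them:
   sigma^-1 is this affine map modulo N.  By Cassini's identity
   a^2 = (-1)^n (mod N), it is an involution when n is even; when n is odd its
   square is i |-> a - 1 - i, so it has order 4 and the points fixed by its
   square are the solutions of 2i + 1 = a (mod N): exactly one if N is odd,
   and exactly two, exchanged by the map, if N is even.  Finally F_n is even
   iff 3 divides n. *)

Lemma fibSS n : fib n.+2 = fib n.+1 + fib n.
Proof. by []. Qed.

Lemma fib_gt0 n : 0 < n -> 0 < fib n.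
Proof. by case: n => // n _; elim: n => // n IH; rewrite fibSS ltn_addr. Qed.

Lemma cassini n : fib n.+1 * fib n.+1 + odd n = fib n.+2 * fib n + ~~ odd n.
Proof.
elim: n => // n; rewrite [fib n.+3]fibSS [fib n.+2]fibSS -[odd n.+1]/(~~ odd n) negbK.
by move: (fib n.+1) (fib n) => x y; case: (odd n) => /=; nia.
Qed.

Lemma fib_odd n : odd (fib n) = ~~ (3 %| n).
Proof.
elim/ltn_ind: n => -[|[|[|n]]] // IH.
by rewrite !fibSS addnAC addnn oddD odd_double IH //; lia.
Qed.

Lemma dvd_fib_sqr_pred_succ n : odd n -> fib n %| fib n.-1 * fib n.-1 + 1.
Proof.
case: n => [|[|n]] //= n_odd; rewrite negbK in n_odd.
by have := cassini n; rewrite n_odd => ->; rewrite addn0 dvdn_mulr.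
Qed.

Lemma fib_sqr_pred_mod n : 0 < n -> ~~ odd n ->
  fib n.-1 * fib n.-1 = 1 %[mod fib n].
Proof.
case: n => [|[|n]] //= _ n_even; rewrite negbK in n_even.
by have := cassini n; rewrite (negbTE n_even) addn0 => ->; rewrite mulnC modnMDl.
Qed.

Lemma eqn_modS m n d : (m.+1 == n.+1 %[mod d]) = (m == n %[mod d]).
Proof. by rewrite -addn1 -[n.+1]addn1 eqn_modDr. Qed.

Lemma double_succ_mod_exists N b : 0 < N -> odd N || odd b ->
  exists2 i, i < N & (2 * i).+1 = b %[mod N].
Proof.
move=> N_gt0 odd_Nb; have b_lt : b %% N < N by rewrite ltn_mod.
have := odd_double_half (b %% N); case odd_b: (odd (b %% N)) => /= b_eq.
  by exists (b %% N)./2; [lia | rewrite mul2n -add1n b_eq modn_mod].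
have odd_N : odd N.
  by case/orP: odd_Nb => //; apply: contraLR => /negbTE/odd_mod <-; rewrite odd_b.
exists (b %% N + N)./2; first lia.
by rewrite (_ : (2 * _).+1 = b %% N + N) ?modnDr ?modn_mod //; lia.
Qed.

Lemma double_mod_inj N i j : odd N -> i < N -> j < N ->
  2 * i = 2 * j %[mod N] -> i = j.
Proof.
move=> odd_N; wlog le_ji : i j / j <= i => [wlog_ij lt_iN lt_jN eq_ij|].
  by case: (leqP j i) => [|/ltnW] le; [|symmetry]; apply: wlog_ij.
move=> lt_iN _ /eqP; rewrite eqn_mod_dvd ?leq_mul2l ?le_ji ?orbT //.
rewrite -mulnBr Gauss_dvdr ?coprimen2 //.
by have [|/dvdn_leq le_N] := posnP (i - j); [lia | move/le_N; lia].
Qed.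

Lemma double_mod_half N i j : ~~ odd N ->
  (2 * i == 2 * j %[mod N]) = (i == j %[mod N./2]).
Proof.
move=> even_N; have : N = 2 * N./2.
  by have := odd_double_half N; rewrite (negbTE even_N) add0n -mul2n.
by move: N./2 => M ->; rewrite -!muln_modr eqn_pmul2l.
Qed.

Lemma eq_mod_pigeonhole M i j k : i < M.*2 -> j < M.*2 -> k < M.*2 ->
  i = j %[mod M] -> i = k %[mod M] -> j != i -> k != i -> j = k.
Proof.
move=> lt_i lt_j lt_k eq_ij eq_ik; have M_gt0 : 0 < M by lia.
have : [/\ i %/ M < 2, j %/ M < 2 & k %/ M < 2].
  by rewrite !ltn_divLR // mul2n.
move: (divn_eq i M) (divn_eq j M) (divn_eq k M); rewrite -eq_ij -eq_ik.
move: (i %/ M) (j %/ M) (k %/ M) (i %% M) => qi qj qk r -> -> -> [].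
by case: qi qj qk => [|[|?]] [|[|?]] [|[|?]]; lia.
Qed.

Definition rank_mod (N a d i : nat) : nat := (a * i.+1 + d) %% N.

Section RankMod.
Variables (N a : nat).
Hypothesis N_gt0 : 0 < N.

Lemma rank_mod_lt d i : rank_mod N a d i < N.
Proof. exact: ltn_pmod. Qed.

Lemma rank_mod_pred_succ i : (rank_mod N a N.-1 i).+1 = a * i.+1 %[mod N].
Proof. by rewrite -addn1 modnDml -addnA addn1 prednK // modnDr. Qed.

Lemma rank_mod_involutive i : a * a = 1 %[mod N] -> i < N ->
  rank_mod N a N.-1 (rank_mod N a N.-1 i) = i.
Proof.
move=> a2 lt_iN; set r := rank_mod N a N.-1.
have : (r (r i)).+1 = i.+1 %[mod N].
  rewrite rank_mod_pred_succ -modnMmr rank_mod_pred_succ modnMmr mulnA.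
  by rewrite -modnMml a2 modnMml mul1n.
by move/eqP; rewrite eqn_modS !modn_small ?rank_mod_lt // => /eqP.
Qed.

Section SqrNegOne.
Hypothesis a2 : N %| a * a + 1.
Let r := rank_mod N a 0.

Lemma rank_mod_sqr_add i : r (r i) + i.+1 = a %[mod N].
Proof.
case/dvdnP: a2 => F eqF.
rewrite /r /rank_mod !addn0 modnDml mulnS -addnA addnC -addnA -modnDml modnMmr modnDml.
by rewrite mulnA addnA -mulSnr -[(a * a).+1]addn1 eqF mulnAC modnMDl.
Qed.

Lemma rank_mod_iter4 i : i < N -> iter 4 r i = i.
Proof.
move=> lt_iN; have := rank_mod_sqr_add (r (r i)); rewrite -(rank_mod_sqr_add i).
rewrite [r (r i) + _]addnS [r (r i) + i]addnC -addnS => /eqP; rewrite eqn_modDr.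
by rewrite !modn_small ?rank_mod_lt // => /eqP.
Qed.

Lemma rank_mod_sqr_fixed i : i < N -> (r (r i) == i) = ((2 * i).+1 == a %[mod N]).
Proof.
move=> lt_iN; rewrite -(rank_mod_sqr_add i) mul2n -addnn -addnS eqn_modDr.
by rewrite !modn_small ?rank_mod_lt // eq_sym.
Qed.

Lemma dvd_sqr_succ_odd : ~~ odd N -> odd a.
Proof.
move=> even_N; have : 2 %| a * a + 1 by apply: dvdn_trans a2; rewrite dvdn2.
by rewrite dvdn2 oddD oddM andbb addbT negbK.
Qed.

Lemma rank_mod_neq i : ~~ odd N -> r i != i.
Proof.
move=> even_N; have odd_a := dvd_sqr_succ_odd even_N; apply/negP => /eqP /(congr1 odd).
by rewrite /r /rank_mod addn0 odd_mod ?(negbTE even_N) // oddM odd_a /=; case: (odd i).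
Qed.

Lemma rank_mod_unique_fixpoint : odd N ->
  exists2 i0, i0 < N & r i0 = i0 /\ forall i, i < N -> r (r i) = i -> i = i0.
Proof.
move=> odd_N; have [i0 lt_i0N i0_sol] : exists2 i0, i0 < N & (2 * i0).+1 = a %[mod N].
  by apply: double_succ_mod_exists; rewrite ?odd_N.
have sqr_fixP i : i < N -> r (r i) = i -> i = i0.
  move=> lt_iN /eqP; rewrite rank_mod_sqr_fixed // -i0_sol eqn_modS => /eqP.
  exact: double_mod_inj.
exists i0 => //; split; apply: sqr_fixP; rewrite ?rank_mod_lt //.
  by congr r; apply/eqP; rewrite rank_mod_sqr_fixed // i0_sol.
Qed.

Lemma rank_mod_unique_2cycle : ~~ odd N -> exists2 i1, i1 < N &
  r (r i1) = i1 /\ forall i, i < N -> r (r i) = i -> i = i1 \/ i = r i1.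
Proof.
move=> even_N; have [i1 lt_i1N i1_sol] : exists2 i1, i1 < N & (2 * i1).+1 = a %[mod N].
  by apply: double_succ_mod_exists; rewrite ?dvd_sqr_succ_odd ?orbT.
have r2_i1 : r (r i1) = i1 by apply/eqP; rewrite rank_mod_sqr_fixed // i1_sol.
have sqr_fix_mod i : i < N -> r (r i) = i -> i1 = i %[mod N./2].
  move=> lt_iN /eqP; rewrite rank_mod_sqr_fixed // -i1_sol eqn_modS.
  by rewrite double_mod_half // eq_sym => /eqP.
have N_eq : N = N./2.*2.
  by have := odd_double_half N; rewrite (negbTE even_N) add0n.
exists i1 => //; split => // i lt_iN r2_i.
have [->|ne_i] := eqVneq i i1; [by left | right].
apply: (@eq_mod_pigeonhole N./2 i1); rewrite -?N_eq ?rank_mod_lt ?rank_mod_neq //.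
  exact: sqr_fix_mod.
by apply: sqr_fix_mod; rewrite ?rank_mod_lt ?r2_i1.
Qed.

End SqrNegOne.
End RankMod.

(* The index i stands for k = i + 1, and [(fib n).-1] for -1 modulo [fib n]. *)
Definition golden_rank (n : nat) : nat -> nat :=
  rank_mod (fib n) (fib n.-1) (if odd n then 0 else (fib n).-1).

Lemma golden_rank_iter4 n i : 0 < n -> i < fib n -> iter 4 (golden_rank n) i = i.
Proof.
move=> n_gt0 lt_i; have N_gt0 := fib_gt0 n_gt0; rewrite /golden_rank.
case: ifP => [odd_n | /negbT even_n].
  exact: (rank_mod_iter4 N_gt0 (dvd_fib_sqr_pred_succ odd_n) lt_i).
by rewrite /= !(rank_mod_involutive N_gt0) ?fib_sqr_pred_mod ?rank_mod_lt.
Qed.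

Section Golden.
Local Open Scope ring_scope.
Variable R : realType.
Local Notation phi := (golden R).

Lemma golden_sqr : phi * phi = phi + 1.
Proof.
have s5 := @sqr_sqrtr R 5 (ler0n _ 5); rewrite expr2 in s5.
rewrite /golden; set s := Num.sqrt 5 in s5 *; apply/eqP; rewrite -subr_eq0.
have -> : (1 + s) / 2 * ((1 + s) / 2) - ((1 + s) / 2 + 1) = (s * s - 5) / 4 by field.
by rewrite s5 subrr mul0r.
Qed.

Lemma golden_bounds : 1 < phi < 2.
Proof.
have s5 := @sqr_sqrtr R 5 (ler0n _ 5); have s_ge0 := @sqrtr_ge0 R 5.
rewrite /golden; set s := Num.sqrt 5 in s5 s_ge0 *; rewrite expr2 in s5.
have [s_gt2 s_lt3] : 2 < s /\ s < 3 by split; nra.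
by apply/andP; split; lra.
Qed.

Lemma fib_sub_golden m : (fib m.+1)%:R - phi * (fib m)%:R = (1 - phi) ^+ m.
Proof.
elim: m => [|m IH]; first by rewrite /= mulr0 subr0.
rewrite exprS -IH fibSS natrD.
have -> : (1 - phi) * ((fib m.+1)%:R - phi * (fib m)%:R) =
    (fib m.+1)%:R + (fib m)%:R - phi * (fib m.+1)%:R
    + (phi * phi - (phi + 1)) * (fib m)%:R.
  by ring.
by rewrite golden_sqr subrr mul0r addr0.
Qed.

Lemma fib_le_golden_pow m : (fib m.+1)%:R <= phi ^+ m.
Proof.
have [phi_gt1 _] := andP golden_bounds.
suff : (fib m.+1)%:R <= phi ^+ m /\ (fib m.+2)%:R <= phi ^+ m.+1 by case.
elim: m => [|m [IH1 IH2]]; first by rewrite /= expr0 expr1; split; lra.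
split=> //; rewrite fibSS natrD !exprS.
have -> : phi * (phi * phi ^+ m) = phi * phi ^+ m + phi ^+ m.
  by rewrite mulrA golden_sqr mulrDl mul1r.
by rewrite -exprS; lra.
Qed.

Lemma fib_mul_golden_conj_lt1 n : (0 < n)%N -> (fib n)%:R * (phi - 1) ^+ n < 1.
Proof.
case: n => // m _; have [phi_gt1 phi_lt2] := andP golden_bounds.
have conj_ge0 : 0 <= phi - 1 by lra.
rewrite exprS mulrCA.
apply: (le_lt_trans (y := (phi - 1) * (phi ^+ m * (phi - 1) ^+ m))).
  by rewrite ler_wpM2l // ler_wpM2r ?exprn_ge0 ?fib_le_golden_pow.
have phi_conj : phi * (phi - 1) = 1 by rewrite mulrBr golden_sqr mulr1; ring.
by rewrite -exprMn phi_conj expr1n; lra.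
Qed.

Lemma frac_bucket (x : R) (N m b : nat) (d : R) : (b < N)%N -> 0 <= d < 1 ->
  N%:R * x = (m * N + b)%:R + d -> b%:R <= N%:R * Defs.frac x < b.+1%:R.
Proof.
move=> lt_bN /andP[d_ge0 d_lt1] eq_x.
have N_gt0 : 0 < N%:R :> R by rewrite ltr0n (leq_ltn_trans _ lt_bN).
have lt_bN' : b%:R + 1 <= N%:R :> R by rewrite natr1 ler_nat.
have floor_x : Num.floor x = m%:Z.
  apply/floor_def; rewrite -(ler_pM2l N_gt0) -(ltr_pM2l N_gt0) eq_x.
  have b_ge0 := ler0n R b.
  by rewrite -pmulrn intrD -pmulrn natrD natrM mulrDr mulr1 [m%:R * _]mulrC; lra.
have : N%:R * Defs.frac x = b%:R + d.
  by rewrite /Defs.frac floor_x -pmulrn mulrBr eq_x natrD natrM; ring.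
by move=> ->; rewrite -natr1; lra.
Qed.

Lemma frac_golden_rank n i : (0 < n)%N -> (i < fib n)%N ->
  (golden_rank n i)%:R <= (fib n)%:R * Defs.frac (i.+1%:R * phi) <
  (golden_rank n i).+1%:R.
Proof.
case: n => // m _ lt_i; rewrite /golden_rank /rank_mod [m.+1.-1]/=.
set N := fib m.+1; set a := fib m; set k := i.+1; set T := (phi - 1) ^+ m.+1.
have N_gt0 : (0 < N)%N := leq_ltn_trans (leq0n i) lt_i.
have [phi_gt1 _] := andP golden_bounds.
have kT_gt0 : 0 < k%:R * T by rewrite mulr_gt0 ?ltr0n ?exprn_gt0 ?subr_gt0.
have kT_lt1 : k%:R * T < 1.
  apply: le_lt_trans (fib_mul_golden_conj_lt1 (ltn0Sn m)).
  by rewrite ler_wpM2r ?ler_nat ?exprn_ge0 ?subr_ge0 ?ltW.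
have N_phi : N%:R * phi = (N + a)%:R - (-1) ^+ odd m.+1 * T.
  rewrite signr_odd -exprNn opprB -fib_sub_golden -fibSS; ring.
(* N k phi is k (N + a) + k T for odd n and k (N + a) - k T for even n. *)
set c := if odd m.+1 then 0%N else N.-1.
set M := (k.-1 + odd m.+1 + (a * k + c) %/ N)%N.
apply: (frac_bucket (m := M) (d := if odd m.+1 then k%:R * T else 1 - k%:R * T)).
- by rewrite ltn_pmod.
- by case: ifP => _; lra.
have eq_MN : (M * N + (a * k + c) %% N = (i + odd m.+1) * N + (a * k + c))%N.
  by rewrite /M mulnDl -addnA -divn_eq.
clearbody N a T; rewrite eq_MN mulrCA N_phi /c /k.
have N_pred : (N.-1)%:R = N%:R - 1 :> R by rewrite -[in RHS](prednK N_gt0) -natr1 addrK.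
case: (odd m.+1); rewrite /= ?addn0 ?addn1 !natrD !natrM ?N_pred -?natr1; ring.
Qed.

End Golden.

Lemma homo_ltn_ord_ge N (g : 'I_N -> nat) :
  {homo g : i j / i < j} -> forall i : 'I_N, i <= g i.
Proof.
move=> g_homo [i lt_iN]; elim: i lt_iN => // i IH lt_iN.
have lt_i := ltnW lt_iN.
exact: leq_ltn_trans (IH lt_i) (g_homo (Ordinal lt_i) (Ordinal lt_iN) (ltnSn i)).
Qed.

Lemma homo_ltn_ord_id N (g : 'I_N -> nat) :
  (forall i, g i < N) -> {homo g : i j / i < j} -> forall i : 'I_N, g i = i.
Proof.
move=> g_lt g_homo i; apply/eqP; rewrite eqn_leq homo_ltn_ord_ge // andbT.
pose g' j := N.-1 - g (rev_ord j).
have g'_homo : {homo g' : j k / j < k}.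
  move=> j k lt_jk; have := g_homo (rev_ord k) (rev_ord j).
  have := g_lt (rev_ord j); have := g_lt (rev_ord k); have := ltn_ord k.
  rewrite /g' /=; lia.
have := homo_ltn_ord_ge g'_homo (rev_ord i); rewrite /g' rev_ordK /=.
by have := g_lt i; lia.
Qed.

Lemma kronecker_perm_rank (R : realType) (alpha : R) N (s : {perm 'I_N})
    (r : nat -> nat) : (forall i, i < N -> r i < N) -> {in gtn N &, injective r} ->
  (forall i, i < N ->
     ((r i)%:R <= N%:R * Defs.frac (i.+1%:R * alpha) < (r i).+1%:R)%R) ->
  is_kronecker_perm alpha s -> forall x, r (s x) = x.
Proof.
move=> r_lt r_inj r_frac s_kron; apply: homo_ltn_ord_id => [x|x y lt_xy].
  exact: r_lt.
have N_gt0 : (0 < N%:R :> R)%R by rewrite ltr0n (leq_ltn_trans _ (ltn_ord y)).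
have /andP[rx_le _] := r_frac _ (ltn_ord (s x)).
have /andP[_ ry_lt] := r_frac _ (ltn_ord (s y)).
have : ((r (s x))%:R < (r (s y)).+1%:R :> R)%R.
  by rewrite (le_lt_trans rx_le) // (lt_trans _ ry_lt) // ltr_pM2l // s_kron.
rewrite ltr_nat ltnS leq_eqVlt => /orP[/eqP eq_r|//].
have /perm_inj eq_xy := val_inj (r_inj _ _ (ltn_ord _) (ltn_ord _) eq_r).
by move: lt_xy; rewrite eq_xy ltnn.
Qed.

Lemma kronecker_golden_rank (R : realType) n (s : {perm 'I_(fib n)}) : 0 < n ->
  is_kronecker_perm (golden R) s -> forall x, golden_rank n (s x) = x.
Proof.
move=> n_gt0; apply: kronecker_perm_rank => [i _ | | i]; last exact: frac_golden_rank.
  by rewrite rank_mod_lt ?fib_gt0.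
apply: (can_in_inj (g := iter 3 (golden_rank n))) => i lt_i.
by rewrite -iterSr golden_rank_iter4.
Qed.

Section PermOrbits.
Variables (T : finType) (u : {perm T}).

Lemma iter_porbit_dvd x m : (iter m u x == x) = (#|porbit u x| %| m).
Proof.
set p := #|porbit u x|; have p_gt0 : 0 < p by rewrite lt0n card_porbit_neq0.
have iter_mul k : iter (k * p) u x = x.
  by elim: k => // k IH; rewrite mulSn iterD IH iter_porbit.
rewrite {1}(divn_eq m p) addnC iterD iter_mul /dvdn.
have lt_mp : m %% p < p by rewrite ltn_mod.
rewrite -{2}[x](nth_traject u p_gt0) -(nth_traject u lt_mp).
by rewrite nth_uniq ?size_traject ?uniq_traject_porbit.
Qed.

Lemma card_porbit_involution x : u (u x) = x -> #|porbit u x| \in [:: 1; 2].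
Proof.
move/eqP; rewrite -[u (u x)]/(iter 2 u x) iter_porbit_dvd.
by have := card_porbit_neq0 u x; case: #|_| => [|[|[|p]]].
Qed.

Lemma card_porbit_order4 x :
  iter 4 u x = x -> u (u x) != x -> #|porbit u x| = 4.
Proof.
move/eqP; rewrite -[u (u x)]/(iter 2 u x) !iter_porbit_dvd.
by have := card_porbit_neq0 u x; case: #|_| => [|[|[|[|[|p]]]]].
Qed.

Lemma card_porbit_eq1 x : (#|porbit u x| == 1) = (u x == x).
Proof. by rewrite -[u x]/(iter 1 u x) iter_porbit_dvd dvdn1. Qed.

Lemma card_porbit_2cycle x : u x != x -> u (u x) = x -> #|porbit u x| = 2.
Proof.
rewrite -card_porbit_eq1 => ne1 /card_porbit_involution.
by rewrite !inE (negbTE ne1) => /eqP.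
Qed.

Lemma card_porbits_size_one k x0 : #|porbit u x0| = k ->
  (forall x, #|porbit u x| = k -> x \in porbit u x0) ->
  #|[set C in porbits u | #|C| == k]| = 1.
Proof.
move=> card_x0 sizeP; apply/eqP/cards1P; exists (porbit u x0).
apply/setP => C; rewrite !inE; apply/andP/eqP => [[/imsetP[x _ ->] /eqP /sizeP]|->].
  by rewrite -eq_porbit_mem => /eqP.
by rewrite card_x0 eqxx imset_f.
Qed.

Lemma porbits_order4_unique_fixpoint x0 : (forall x, iter 4 u x = x) ->
  (forall x, u (u x) = x -> x = x0) -> u x0 = x0 ->
  (forall C, C \in porbits u -> #|C| \in [:: 1; 4]) /\
  #|[set C in porbits u | #|C| == 1]| = 1.
Proof.
move=> u4 sqr_fixP ux0; split.
  move=> C /imsetP[x _ ->]; have [/sqr_fixP ->|] := eqVneq (u (u x)) x.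
    by move/eqP: ux0; rewrite -card_porbit_eq1 => /eqP ->.
  by move/(card_porbit_order4 (u4 x)) ->.
apply: (card_porbits_size_one (x0 := x0)) => [|x /eqP].
  by apply/eqP; rewrite card_porbit_eq1 ux0.
by rewrite card_porbit_eq1 => /eqP ux; rewrite (sqr_fixP x) ?porbit_id ?ux.
Qed.

Lemma porbits_order4_unique_2cycle x1 : (forall x, iter 4 u x = x) ->
  (forall x, u x != x) -> (forall x, u (u x) = x -> x = x1 \/ x = u x1) ->
  u (u x1) = x1 ->
  (forall C, C \in porbits u -> #|C| \in [:: 2; 4]) /\
  #|[set C in porbits u | #|C| == 2]| = 1.
Proof.
move=> u4 no_fix sqr_fixP ux1; split.
  move=> C /imsetP[x _ ->]; have [ux|] := eqVneq (u (u x)) x.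
    by rewrite card_porbit_2cycle.
  by move/(card_porbit_order4 (u4 x)) ->.
apply: (card_porbits_size_one (x0 := x1)) => [|x px].
  exact: card_porbit_2cycle.
have /eqP/sqr_fixP[->|->] : iter 2 u x == x by rewrite iter_porbit_dvd px.
  exact: porbit_id.
by have := mem_porbit u 1 x1; rewrite expg1.
Qed.

End PermOrbits.

Lemma iter_perm_val N (u : {perm 'I_N}) (f : nat -> nat) :
  (forall y, val (u y) = f y) -> forall m y, val (iter m u y) = iter m f y.
Proof. by move=> u_val; elim=> // m IH y; rewrite !iterS u_val IH. Qed.

Section RankPerm.
Variables (N a : nat) (u : {perm 'I_N}).
Hypothesis N_gt0 : 0 < N.

Lemma porbits_rank_involutive : a * a = 1 %[mod N] ->
  (forall y, val (u y) = rank_mod N a N.-1 y) ->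
  forall C, C \in porbits u -> #|C| \in [:: 1; 2].
Proof.
move=> a2 u_val C /imsetP[x _ ->]; apply: card_porbit_involution.
by apply: val_inj; rewrite !u_val rank_mod_involutive.
Qed.

Section SqrNegOne.
Hypotheses (a2 : N %| a * a + 1) (u_val : forall y, val (u y) = rank_mod N a 0 y).

Let u4 x : iter 4 u x = x.
Proof. by apply: val_inj; rewrite (iter_perm_val u_val) rank_mod_iter4. Qed.

Lemma porbits_rank_unique_fixpoint : odd N ->
  (forall C, C \in porbits u -> #|C| \in [:: 1; 4]) /\
  #|[set C in porbits u | #|C| == 1]| = 1.
Proof.
move=> odd_N.
have [i0 lt_i0N [r_i0 sqr_fixP]] := rank_mod_unique_fixpoint N_gt0 a2 odd_N.
apply: (porbits_order4_unique_fixpoint (x0 := Ordinal lt_i0N)) => //.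
  move=> x /(congr1 val); rewrite !u_val => /sqr_fixP-/(_ (ltn_ord x)) eq_x.
  exact: val_inj.
by apply: val_inj; rewrite u_val.
Qed.

Lemma porbits_rank_unique_2cycle : ~~ odd N ->
  (forall C, C \in porbits u -> #|C| \in [:: 2; 4]) /\
  #|[set C in porbits u | #|C| == 2]| = 1.
Proof.
move=> even_N.
have [i1 lt_i1N [r2_i1 sqr_fixP]] := rank_mod_unique_2cycle N_gt0 a2 even_N.
apply: (porbits_order4_unique_2cycle (x1 := Ordinal lt_i1N)) => //.
- by move=> x; rewrite -(inj_eq val_inj) u_val rank_mod_neq.
- move=> x /(congr1 val); rewrite !u_val => /sqr_fixP-/(_ (ltn_ord x)).
  by case=> eq_x; [left | right]; apply: val_inj; rewrite ?u_val.
by apply: val_inj; rewrite !u_val.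
Qed.

End SqrNegOne.
End RankPerm.

Theorem theorem1 (R : realType) (n : nat) (s : {perm 'I_(fib n)}) :
  (0 < n)%N ->
  is_kronecker_perm (golden R) s ->
  [/\ (~~ odd n -> forall C, C \in porbits s -> #|C| \in [:: 1; 2]%N),
      ((n %% 6 == 1) || (n %% 6 == 5) ->
         (forall C, C \in porbits s -> #|C| \in [:: 1; 4]%N) /\
         #|[set C in porbits s | #|C| == 1%N]| = 1%N)
    & (n %% 6 == 3 ->
         (forall C, C \in porbits s -> #|C| \in [:: 2; 4]%N) /\
         #|[set C in porbits s | #|C| == 2%N]| = 1%N)].
Proof.
move=> n_gt0 s_kron; have N_gt0 := fib_gt0 n_gt0.
have sV_val y : val (s^-1 y)%g = golden_rank n y.
  by have := kronecker_golden_rank n_gt0 s_kron (s^-1 y)%g; rewrite permKV.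
rewrite -porbitsV /golden_rank in sV_val *.
have odd_mod6 : odd n = odd (n %% 6) by rewrite odd_mod.
have odd_fib_mod6 : odd (fib n) = ~~ (3 %| n %% 6) by rewrite fib_odd /dvdn modn_dvdm.
split=> [even_n | n_mod6 | /eqP n_mod6].
- rewrite (negbTE even_n) in sV_val.
  exact: porbits_rank_involutive (fib_sqr_pred_mod n_gt0 even_n) sV_val.
- have [odd_n odd_N] : odd n /\ odd (fib n).
    by rewrite odd_mod6 odd_fib_mod6; case/orP: n_mod6 => /eqP ->.
  rewrite odd_n in sV_val.
  exact: porbits_rank_unique_fixpoint N_gt0 (dvd_fib_sqr_pred_succ odd_n) sV_val odd_N.
- have odd_n : odd n by rewrite odd_mod6 n_mod6.
  rewrite odd_n in sV_val.
  apply: porbits_rank_unique_2cycle N_gt0 (dvd_fib_sqr_pred_succ odd_n) sV_val _.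
  by rewrite odd_fib_mod6 n_mod6.
Qed.
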